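(* Let $k\ge1$ and let $w=a_1a_2\cdots a_k$ be an admissible $k$-word, and let $h=h(w)$. Then $h$ is the least non-negative integer $i$ with $T_k^{i}[w]\in\psi_k(V_1)$, and moreover $T_k^{h}[w]=\psi_k([a_{h+1}])$.
   Context: Let $\mathcal{A}$ be a finite alphabet of $r$ symbols and $T=(T_{x,y})$ an $r\times r$ matrix with entries in $\{0,1\}$ which is irreducible, i.e. the directed graph on $\mathcal{A}$ with an edge $x\to y$ iff $T_{y,x}=1$ is strongly connected. An admissible $k$-word is a string $a_1\cdots a_k$ of symbols with $T_{a_{i+1},a_i}=1$ for $1\le i\le k-1$. $V_k$ is the complex vector space with basis $\{[w]\}$ indexed by admissible $k$-words. $\psi_k:V_1\to V_k$ is linear with $\psi_k([a])$ the sum of $[w]$ over all admissible $k$-words beginning with $a$. $T_k:V_k\to V_k$ is linear with $T_k([a_1\cdots a_k])=\sum[a_2\cdots a_kx]$, summed over symbols $x$ with $a_2\cdots a_kx$ admissible. For an admissible $k$-word $u=u_1\cdots u_k$, $h(u)$ is the smallest non-negative integer $h$ such that $u$ is the only admissible $k$-word beginning with $u_1\cdots u_{h+1}$ (so $h(u)\le k-1$). *)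

From HB Require Import structures.
From mathcomp Require Import all_boot all_order all_algebra.
From mathcomp Require Import complex.
Set Implicit Arguments. Unset Strict Implicit. Unset Printing Implicit Defensive.
Import GRing.Theory Num.Theory.
Local Open Scope ring_scope.

(* Alphabet A = 'I_r ; transition matrix T : 'M[bool]_r (true = 1, false = 0). *)

(* irreducible: the digraph with edge x -> y iff T_{y,x} = 1 is strongly connected *)
Definition irreducible_tm (r : nat) (T : 'M[bool]_r) : Prop :=
  forall x y : 'I_r, connect (fun a b => T b a) x y.

Definition admb (r : nat) (T : 'M[bool]_r) (s : seq 'I_r) : bool :=
  all (fun p : 'I_r * 'I_r => T p.2 p.1) (zip s (behead s)).

Definition adm (r : nat) (T : 'M[bool]_r) (k : nat) : finType :=
  {w : k.-tuple 'I_r | admb T w}.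

Definition word (r : nat) (T : 'M[bool]_r) (k : nat) (w : adm T k) : seq 'I_r :=
  val (val w).

Definition V (R : rcfType) (r : nat) (T : 'M[bool]_r) (k : nat) :=
  {ffun adm T k -> R[i]}.

Definition bvec (R : rcfType) (r : nat) (T : 'M[bool]_r) (k : nat) (w : adm T k)
  : V R T k := [ffun v => (v == w)%:R].

Definition psi (R : rcfType) (r : nat) (T : 'M[bool]_r) (k : nat) (x : V R T 1)
  : V R T k :=
  \sum_(u : adm T 1) x u *:
     \sum_(w : adm T k | take 1 (word w) == word u) bvec R w.

Definition Tk_basis (R : rcfType) (r : nat) (T : 'M[bool]_r) (k : nat) (w : adm T k)
  : V R T k :=
  \sum_(x : 'I_r) \sum_(v : adm T k | word v == rcons (behead (word w)) x) bvec R v.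

Definition Tk (R : rcfType) (r : nat) (T : 'M[bool]_r) (k : nat) (f : V R T k)
  : V R T k :=
  \sum_(w : adm T k) f w *: Tk_basis R w.

Lemma admb1 (r : nat) (T : 'M[bool]_r) (a : 'I_r) : admb T (tval [tuple a]).
Proof. by []. Qed.
Definition word1 (r : nat) (T : 'M[bool]_r) (a : 'I_r) : adm T 1 :=
  exist _ [tuple a] (admb1 T a).

Definition hpred (r : nat) (T : 'M[bool]_r) (k : nat) (u : adm T k) (i : nat) : bool :=
  [forall v : adm T k, (take i.+1 (word v) == take i.+1 (word u)) ==> (v == u)].

Lemma hpred_ex (r : nat) (T : 'M[bool]_r) (k : nat) (u : adm T k) :
  exists i, hpred u i.
Proof.
exists k; apply/forallP => v; apply/implyP.
by rewrite !take_oversize ?size_tuple.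
Qed.

Definition h (r : nat) (T : 'M[bool]_r) (k : nat) (u : adm T k) : nat :=
  ex_minn (hpred_ex u).

Lemma h_lt (r : nat) (T : 'M[bool]_r) (k : nat) (hk : (0 < k)%N) (u : adm T k) :
  (h u < k)%N.
Proof.
rewrite /h; case: ex_minnP => m _ Hmin.
have : hpred u k.-1.
  apply/forallP => v; apply/implyP.
  by rewrite prednK // !take_oversize ?size_tuple.
move/Hmin; by case: k hk {u Hmin}.
Qed.

From HB Require Import structures.
From mathcomp Require Import all_boot all_order all_algebra.
From mathcomp Require Import complex zify.
Set Implicit Arguments. Unset Strict Implicit. Unset Printing Implicit Defensive.
Import GRing.Theory Num.Theory.
Local Open Scope ring_scope.

(* The coordinate of T_k^i [w] at an admissible word u is 1 when the first
   k - i letters of u are the last k - i letters a_{i+1} ... a_k of w, and 0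
   otherwise, whereas a vector of psi_k(V_1) has coordinates depending only on
   the first letter of u.  For i = h(w) the prefix a_1 ... a_{h+1} determines w,
   so every admissible u starting with a_{h+1} continues as a_{h+1} ... a_k and
   T_k^h [w] = psi_k [a_{h+1}].  For i < h(w) some admissible v <> w shares the
   prefix a_1 ... a_{i+1}, hence differs from w after position i; since an
   irreducible T with an edge has no sink, both tails a_{i+1} ... a_k and
   v_{i+1} ... v_k extend to admissible k-words, which start with the same
   letter but are separated by T_k^i [w]. *)

Lemma sum_indicator (S : pzSemiRingType) (I : finType) (P : pred I) (u : I) :
  \sum_(v | P v) (u == v)%:R = (P u)%:R :> S.
Proof.
case Pu: (P u); last first.
  by rewrite big1 // => v Pv; case: eqP => // uv; rewrite uv Pv in Pu.
rewrite (bigD1 u) //= eqxx big1 ?addr0 // => v /andP[_ /negbTE].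
by rewrite eq_sym => ->.
Qed.

Lemma drop_tnth (A : Type) (n : nat) (t : n.-tuple A) (j : 'I_n) :
  drop j t = tnth t j :: drop j.+1 t.
Proof. by rewrite (drop_nth (tnth t j)) ?size_tuple // -tnth_nth. Qed.

Lemma take_tnth (A : Type) (n : nat) (t : n.-tuple A) (j : 'I_n) :
  take j.+1 t = rcons (take j t) (tnth t j).
Proof. by rewrite (take_nth (tnth t j)) ?size_tuple // -tnth_nth. Qed.

Section ShiftSpace.
Variables (R : rcfType) (r : nat) (T : 'M[bool]_r).

Definition edge : rel 'I_r := fun a b => T b a.

Definition sinkless : Prop := forall a, exists b, T b a.

Lemma admbE s : admb T s = sorted edge s.
Proof. by case: s => // x s; elim: s x => //= y s IH x; rewrite -IH. Qed.

Lemma admb_take n s : admb T s -> admb T (take n s).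
Proof. by rewrite !admbE; apply: take_sorted. Qed.

Lemma admb_drop n s : admb T s -> admb T (drop n s).
Proof. by rewrite !admbE; apply: drop_sorted. Qed.

Lemma admb_cat_cons p x q :
  admb T (rcons p x) -> admb T (x :: q) -> admb T (p ++ x :: q).
Proof. by rewrite !admbE sorted_cat_cons => -> /= ->. Qed.

Lemma admb_cons_take n y t :
  (0 < n)%N -> admb T (y :: take n t) -> admb T t -> admb T (y :: t).
Proof.
by case: n t => [|n] [|z t] //; rewrite !admbE /= => _ /andP[-> _] ->.
Qed.

Lemma irreducible_sinkless a b : irreducible_tm T -> T b a -> sinkless.
Proof.
move=> Tirr Tba z; have /connectP[[|z' p] /= zp za] := Tirr z a.
  by exists b; rewrite -za.
by case/andP: zp => Tz _; exists z'.
Qed.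

Lemma sinkless_path n x : sinkless -> exists q, size q = n /\ path edge x q.
Proof.
move=> succ; elim: n x => [|n IH] x; first by exists [::].
have [y Tyx] := succ x; have [q [<- yq]] := IH y.
by exists (y :: q); rewrite /= yq andbT.
Qed.

Lemma word_word1 (a : 'I_r) : word (word1 T a) = [:: a].
Proof. by []. Qed.

Lemma bvecE k (v u : adm T k) : bvec R v u = (u == v)%:R.
Proof. by rewrite ffunE. Qed.

Section Words.
Variable k : nat.

Definition adm_of s (ss : size s == k) (ts : admb T s) : adm T k :=
  exist _ (Tuple ss) ts.

Lemma word_adm_of s (ss : size s == k) (ts : admb T s) :
  word (adm_of ss ts) = s.
Proof. by []. Qed.

Lemma word_inj : injective (@word r T k).
Proof. by move=> u v uv; apply/val_inj/val_inj. Qed.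

Lemma size_word (u : adm T k) : size (word u) = k.
Proof. exact: size_tuple. Qed.

Lemma admb_word (u : adm T k) : admb T (word u).
Proof. exact: (valP u). Qed.

Lemma adm_edge (u : adm T k) : (1 < k)%N -> exists a b, T b a.
Proof.
move: (word u) (admb_word u) (size_word u) => [|a [|b s]] /=;
  try by move=> _ <-.
by rewrite admbE /= => /andP[Tba _] _ _; exists a, b.
Qed.

Lemma sinkless_adm_extend s : sinkless -> admb T s -> (0 < size s <= k)%N ->
  exists u : adm T k, take (size s) (word u) = s.
Proof.
move=> succ; case/lastP: s => [|p x] // ts /andP[_ sk].
have [q [sq xq]] := sinkless_path (k - size (rcons p x)) x succ.
have ss : size (rcons p x ++ q) == k by rewrite size_cat sq subnKC.
have tq : admb T (rcons p x ++ q) by rewrite cat_rcons admb_cat_cons // admbE.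
by exists (adm_of ss tq); rewrite take_size_cat.
Qed.

Lemma sum_word_eq s :
  \sum_(v : adm T k) (word v == s)%:R = (admb T s && (size s == k))%:R :> R[i].
Proof.
have [/andP[ts ss]|nts] := boolP (admb T s && (size s == k)).
  rewrite (bigD1 (adm_of ss ts)) //= eqxx big1 ?addr0 // => v.
  by rewrite -[s]/(word (adm_of ss ts)) (inj_eq word_inj) => /negbTE ->.
rewrite big1 // => v _; case: eqP => // vs.
by rewrite -vs admb_word size_word eqxx in nts.
Qed.

Lemma bvec_sumE (P : pred (adm T k)) u :
  (\sum_(v | P v) bvec R v) u = (P u)%:R.
Proof.
by rewrite sum_ffunE; under eq_bigr do rewrite bvecE; exact: sum_indicator.
Qed.

Lemma psiE (x : V R T 1) (u : adm T k) :
  psi k x u = \sum_a x a * (take 1 (word u) == word a)%:R.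
Proof.
by rewrite /psi sum_ffunE; apply: eq_bigr => a _; rewrite ffunE bvec_sumE.
Qed.

Lemma psi_bvecE (a : adm T 1) (u : adm T k) :
  psi k (bvec R a) u = (take 1 (word u) == word a)%:R.
Proof.
rewrite psiE (bigD1 a) //= bvecE eqxx mul1r big1 ?addr0 // => b /negbTE ba.
by rewrite bvecE ba mul0r.
Qed.

Lemma psi_eq_take1 (x : V R T 1) (u u' : adm T k) :
  take 1 (word u) = take 1 (word u') -> psi k x u = psi k x u'.
Proof. by move=> uu'; rewrite !psiE uu'. Qed.

Lemma hpred_h (w : adm T k) : hpred w (h w).
Proof. by rewrite /h; case: ex_minnP. Qed.

Lemma h_min (w : adm T k) i : hpred w i -> (h w <= i)%N.
Proof. by rewrite /h; case: ex_minnP => m _; apply. Qed.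

Lemma hpred_continuation (w u : adm T k) n : hpred w n -> (n < k)%N ->
  take 1 (word u) = take 1 (drop n (word w)) ->
  take (k - n) (word u) = drop n (word w).
Proof.
move=> wn nk u1; set x := tnth (val w) (Ordinal nk).
have wx : drop n (word w) = x :: drop n.+1 (word w).
  exact: (drop_tnth (val w) (Ordinal nk)).
have [q uq] : exists q, take (k - n) (word u) = x :: q.
  move: u1; rewrite wx -(@take_takel _ 1 (k - n) (word u)) ?subn_gt0 //.
  by case: (take (k - n) (word u)) => [|y q] // [-> _]; exists q.
have ss : size (take n (word w) ++ x :: q) == k.
  by rewrite size_cat -uq !size_takel ?size_word ?leq_subr ?subnKC // ltnW.
have tq : admb T (take n (word w) ++ x :: q).
  apply: admb_cat_cons; last by rewrite -uq admb_take ?admb_word.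
  by rewrite -(take_tnth (val w) (Ordinal nk)) admb_take ?admb_word.
have /(congr1 (@word r T k)) vw : adm_of ss tq = w.
  apply/eqP/(implyP (forallP wn _)); rewrite word_adm_of -cat_rcons.
  rewrite take_size_cat ?size_rcons ?size_takel ?size_word ?(ltnW nk) //.
  by rewrite (take_tnth (val w) (Ordinal nk)).
by rewrite uq -vw word_adm_of drop_size_cat ?size_takel ?size_word ?(ltnW nk).
Qed.

Lemma not_hpred_branch (w : adm T k) i : ~~ hpred w i ->
  exists v : adm T k, take i.+1 (word v) = take i.+1 (word w) /\
                      drop i (word v) != drop i (word w).
Proof.
case/forallPn => v; rewrite negb_imply => /andP[/eqP vw nvw].
exists v; split=> //; apply: contra nvw => /eqP dvw; apply/eqP/word_inj.
rewrite -(cat_take_drop i (word v)) -(cat_take_drop i (word w)) dvw.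
by rewrite -(@take_takel _ i i.+1 (word v)) // vw take_takel.
Qed.

Hypothesis k_gt0 : (0 < k)%N.

Lemma Tk_basisE (w u : adm T k) :
  Tk_basis R w u = (behead (word w) == take k.-1 (word u))%:R.
Proof.
rewrite /Tk_basis sum_ffunE; under eq_bigr do rewrite bvec_sumE.
move: (word u) (size_word u) => s; case/lastP: s => [|s y] /=.
  by move/eqP; rewrite eq_sym gtn_eqF.
move=> sk; have -> : take k.-1 (rcons s y) = s.
  by rewrite -sk size_rcons -cats1 take_size_cat.
under eq_bigr do rewrite eqseq_rcons -mulnb natrM.
by rewrite -mulr_sumr (sum_indicator _ xpredT y) mulr1 eq_sym.
Qed.

Lemma TkE (f : V R T k) (u : adm T k) :
  Tk f u = \sum_v f v * (behead (word v) == take k.-1 (word u))%:R.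
Proof.
by rewrite /Tk sum_ffunE; apply: eq_bigr => v _; rewrite ffunE Tk_basisE.
Qed.

Lemma iter_Tk_bvecE (w u : adm T k) i : (i < k)%N ->
  iter i (@Tk R r T k) (bvec R w) u =
  (take (k - i) (word u) == drop i (word w))%:R.
Proof.
elim: i u => [|i IH] u ik.
  by rewrite /= bvecE subn0 drop0 take_oversize ?size_word // (inj_eq word_inj).
rewrite iterS TkE; under eq_bigr do rewrite IH ?(ltnW ik) // -natrM mulnb.
set n := (k - i.+1)%N; have -> : (k - i = n.+1)%N by rewrite /n; lia.
set t := take k.-1 (word u); set d := drop i.+1 (word w).
have [y wy] : exists y, drop i (word w) = y :: d.
  by eexists; exact: (drop_tnth (val w) (Ordinal (ltnW ik))).
have pred_v (v : adm T k) :
    (take n.+1 (word v) == drop i (word w)) && (behead (word v) == t)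
    = (word v == y :: t) && (take n t == d).
  rewrite wy; case: (word v) (size_word v) => [|a b _] /=.
    by move/eqP; rewrite eq_sym gtn_eqF.
  by rewrite !eqseq_cons; case: (b =P t) => [->|]; rewrite ?andbT ?andbF.
under eq_bigr do rewrite pred_v -mulnb natrM.
rewrite -mulr_suml sum_word_eq /= size_takel ?size_word ?leq_pred //.
rewrite prednK // eqxx andbT /t take_takel ?size_word; last by rewrite /n; lia.
case: (take n (word u) =P d) => [td|]; last by rewrite mulr0.
rewrite (@admb_cons_take n) ?mulr1 ?admb_take ?admb_word //.
  by rewrite /n; lia.
by rewrite take_takel ?td -?wy ?admb_drop ?admb_word //; rewrite /n; lia.
Qed.

Lemma iter_Tk_h (w : adm T k) :
  iter (h w) (@Tk R r T k) (bvec R w)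
  = psi k (bvec R (word1 T (tnth (val w) (Ordinal (h_lt k_gt0 w))))).
Proof.
set j := Ordinal (h_lt k_gt0 w).
have wj : take 1 (drop (h w) (word w)) = [:: tnth (val w) j].
  by rewrite (drop_tnth (val w) j) /= take0.
apply/ffunP => u; rewrite iter_Tk_bvecE ?h_lt // psi_bvecE word_word1.
congr (nat_of_bool _)%:R; apply/eqP/eqP => [uw|u1].
  by rewrite -wj -uw take_takel // subn_gt0 h_lt.
by apply: hpred_continuation (hpred_h w) (h_lt k_gt0 w) _; rewrite u1 wj.
Qed.

Lemma iter_Tk_notin_psi (w : adm T k) i : irreducible_tm T -> (i < h w)%N ->
  ~ exists x : V R T 1, iter i (@Tk R r T k) (bvec R w) = psi k x.
Proof.
move=> Tirr ih [x wx]; have hk := h_lt k_gt0 w; have ik := ltn_trans ih hk.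
have /not_hpred_branch[v [vw dvw]] : ~~ hpred w i.
  by apply/negP => /h_min; rewrite leqNgt ih.
have succ : sinkless.
  have [|a [b Tba]] := adm_edge w; first by lia.
  exact: irreducible_sinkless Tirr Tba.
have extend (s : adm T k) :
    exists u : adm T k, take (k - i) (word u) = drop i (word s).
  have [|u us] := sinkless_adm_extend succ (admb_drop i (admb_word s)).
    by rewrite size_drop size_word subn_gt0 ik leq_subr.
  by exists u; rewrite size_drop size_word in us.
have first_letter (u s : adm T k) : take (k - i) (word u) = drop i (word s) ->
    take 1 (word u) = drop i (take i.+1 (word s)).
  by move=> us; rewrite -(@take_takel _ 1 (k - i)) ?subn_gt0 // us take_drop.
have [u0 u0w] := extend w; have [u1 u1v] := extend v.
have : psi k x u0 = psi k x u1.
  apply: psi_eq_take1.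
  by rewrite (first_letter _ _ u0w) (first_letter _ _ u1v) vw.
rewrite -!wx !iter_Tk_bvecE // u0w u1v eqxx (negbTE dvw) => /eqP.
by rewrite oner_eq0.
Qed.

End Words.
End ShiftSpace.

Theorem lemma1p5 (R : rcfType) (r : nat) (T : 'M[bool]_r)
  (Tirr : irreducible_tm T) (k : nat) (hk : (0 < k)%N) (w : adm T k) :
  let e := bvec R w in
  (* h(w) is the least i with T_k^i [w] in psi_k(V_1) *)
  (exists x : V R T 1, iter (h w) (@Tk R r T k) e = psi k x) /\
  (forall i : nat, (i < h w)%N ->
     ~ (exists x : V R T 1, iter i (@Tk R r T k) e = psi k x)) /\
  (* T_k^h [w] = psi_k([a_{h+1}]) *)
  iter (h w) (@Tk R r T k) e
    = psi k (bvec R (word1 T (tnth (val w) (Ordinal (h_lt hk w))))).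
Proof.
move=> e; have Th := iter_Tk_h R hk w.
split; first by eexists; exact: Th.
by split=> // i ih; apply: iter_Tk_notin_psi.
Qed.
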